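(* Let $d\ge 2$ and consider the non-linear diagonal network $f_1(\mathbf{x})=s(\mathbf{w}_1\odot\mathbf{x},\mathbf{b}_1)$, $f_2(\mathbf{x})=s(\mathbf{w}_2\odot f_1(\mathbf{x}),\mathbf{b}_2)$ with trainable $\mathbf{w}_1,\mathbf{w}_2,\mathbf{b}_1,\mathbf{b}_2\in\mathbb{R}^d$, trained by gradient flow on $\mathcal{L}_{CL}(f_2)$ for pretraining data with $\phi_1=\phi_2=1$, $\sigma=0$, $\alpha_1=0$, $\alpha_2=1$ (other $\phi_i>0$, $\alpha_i\in[0,1]$ arbitrary). Write $w_{lk}^{(t)}$ for the $k$-th entry of $\mathbf{w}_l$ at time $t$. Suppose that at initialization $\mathbf{b}_1^{(0)}=\mathbf{b}_2^{(0)}=(b_0,\dots,b_0)^\top$ with $b_0>0$, $|w_{22}^{(0)}|\le\sqrt{b_0}$ and $|w_{22}^{(0)}|(|w_{12}^{(0)}|-b_0)\ge b_0$. Then as $t\to\infty$, $\|f_2^{(t)}(\mathbf{e}_2)\|\to 0$, while $\liminf_{t\to\infty}\|f_1^{(t)}(\mathbf{e}_2)\|\ge\sqrt{b_0}$.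
   Context: $s(a,b)=\mathrm{ReLU}(a-b)-\mathrm{ReLU}(-a-b)$ is the symmetrized ReLU, applied entrywise to vectors; $\odot$ is the entrywise product. Pretraining distribution: $\mathbf{x}\in\mathbb{R}^d$ with independent coordinates $x_i$ uniform on $\{-\phi_i,\phi_i\}$. Augmentation $\mathcal{A}(\mathbf{x})$: for each $i$ independently, with probability $\alpha_i$ the sign of $x_i$ is re-randomized (uniform $\pm\phi_i$), otherwise kept; then noise of covariance $\sigma^2\mathbf{I}$ is added (here $\sigma=0$, so no noise). $\mathcal{L}_{CL}(f)=-2\,\mathbb{E}_{\mathbf{x},\,\mathbf{x}_1^+,\mathbf{x}_2^+\sim\mathcal{A}(\mathbf{x})}[f(\mathbf{x}_1^+)^\top f(\mathbf{x}_2^+)]+\mathbb{E}_{\mathbf{x}_1,\mathbf{x}_2\text{ i.i.d.}}[(f(\mathcal{A}(\mathbf{x}_1))^\top f(\mathcal{A}(\mathbf{x}_2)))^2]$, with independent augmentations. Gradient flow: $\frac{d}{dt}\theta^{(t)}=-\nabla_\theta\mathcal{L}_{CL}(f_2)$ for every parameter $\theta$ (with the standard a.e. derivative of ReLU). $\mathbf{e}_2$ is the second standard basis vector. *)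

From HB Require Import structures.
From mathcomp Require Import all_boot all_order all_algebra.
From mathcomp Require Import all_classical all_reals all_analysis.
Set Implicit Arguments. Unset Strict Implicit. Unset Printing Implicit Defensive.
Import Order.TTheory GRing.Theory Num.Theory.
Import numFieldNormedType.Exports.
Local Open Scope classical_set_scope.
Local Open Scope ring_scope.

Section Defs.
Variables (R : realType) (d : nat).

Definition relu (z : R) : R := Num.max z 0.
Definition drelu (z : R) : R := if 0 < z then 1 else 0.

Definition sym_relu (a b : R) : R := relu (a - b) - relu (- a - b).
Definition dsym_a (a b : R) : R := drelu (a - b) + drelu (- a - b).
Definition dsym_b (a b : R) : R := - drelu (a - b) + drelu (- a - b).

Definition vec := 'I_d -> R.

Definition net1 (w1 b1 : vec) (x : vec) : vec :=
  fun k => sym_relu (w1 k * x k) (b1 k).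
Definition net2 (w1 w2 b1 b2 : vec) (x : vec) : vec :=
  fun k => sym_relu (w2 k * net1 w1 b1 x k) (b2 k).

Inductive pkind := PW1 | PW2 | PB1 | PB2.

Definition dnet2 (w1 w2 b1 b2 : vec) (p : pkind) (j : 'I_d) (x : vec)
  (k : 'I_d) : R :=
  if j == k then
    let a1 := w1 k * x k in
    let h := net1 w1 b1 x k in
    let a2 := w2 k * h in
    match p with
    | PW2 => dsym_a a2 (b2 k) * h
    | PB2 => dsym_b a2 (b2 k)
    | PW1 => dsym_a a2 (b2 k) * w2 k * (dsym_a a1 (b1 k) * x k)
    | PB1 => dsym_a a2 (b2 k) * w2 k * dsym_b a1 (b1 k)
    end
  else 0.

(* data distribution: x_i uniform on {-phi_i, phi_i}, independent *)
Definition sgnb (s : bool) : R := if s then 1 else -1.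
Definition datapt (phi : vec) (s : {ffun 'I_d -> bool}) : vec :=
  fun i => sgnb (s i) * phi i.
Definition pdata : R := (2 ^+ d)^-1.

(* augmentation outcome per coordinate: (resample?, fresh sign);
   resample w.p. alpha_i, fresh sign uniform; sigma = 0 (no noise) *)
Definition augpt (phi : vec) (s : {ffun 'I_d -> bool})
  (a : {ffun 'I_d -> bool * bool}) : vec :=
  fun i => if (a i).1 then sgnb (a i).2 * phi i else sgnb (s i) * phi i.
Definition paug (alpha : vec) (a : {ffun 'I_d -> bool * bool}) : R :=
  \prod_i ((if (a i).1 then alpha i else 1 - alpha i) / 2).

(* E_{x, x1+, x2+ ~ A(x)} [g x1+ x2+] *)
Definition Epos (phi alpha : vec) (g : vec -> vec -> R) : R :=
  \sum_(s : {ffun 'I_d -> bool}) \sum_(a1 : {ffun 'I_d -> bool * bool})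
   \sum_(a2 : {ffun 'I_d -> bool * bool})
    pdata * paug alpha a1 * paug alpha a2 *
      g (augpt phi s a1) (augpt phi s a2).

(* E_{x1, x2 iid} [h (A x1) (A x2)] with independent augmentations *)
Definition Eneg (phi alpha : vec) (h : vec -> vec -> R) : R :=
  \sum_(s1 : {ffun 'I_d -> bool}) \sum_(s2 : {ffun 'I_d -> bool})
   \sum_(a1 : {ffun 'I_d -> bool * bool}) \sum_(a2 : {ffun 'I_d -> bool * bool})
    pdata * pdata * paug alpha a1 * paug alpha a2 *
      h (augpt phi s1 a1) (augpt phi s2 a2).

Definition dotf (w1 w2 b1 b2 : vec) (u v : vec) : R :=
  \sum_k net2 w1 w2 b1 b2 u k * net2 w1 w2 b1 b2 v k.

Definition loss_CL (phi alpha : vec) (w1 w2 b1 b2 : vec) : R :=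
  - 2 * Epos phi alpha (dotf w1 w2 b1 b2)
  + Eneg phi alpha (fun u v => (dotf w1 w2 b1 b2 u v) ^+ 2).

Definition ddotf (w1 w2 b1 b2 : vec) (p : pkind) (j : 'I_d) (u v : vec) : R :=
  \sum_k (dnet2 w1 w2 b1 b2 p j u k * net2 w1 w2 b1 b2 v k
          + net2 w1 w2 b1 b2 u k * dnet2 w1 w2 b1 b2 p j v k).

Definition grad_CL (phi alpha : vec) (w1 w2 b1 b2 : vec) (p : pkind)
  (j : 'I_d) : R :=
  - 2 * Epos phi alpha (ddotf w1 w2 b1 b2 p j)
  + Eneg phi alpha
      (fun u v => 2 * dotf w1 w2 b1 b2 u v * ddotf w1 w2 b1 b2 p j u v).

Definition gradient_flow (phi alpha : vec) (W1 W2 B1 B2 : R -> vec) : Prop :=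
  let traj p := match p with PW1 => W1 | PW2 => W2 | PB1 => B1 | PB2 => B2 end in
  forall (p : pkind) (j : 'I_d),
    (traj p x j : R) @[x --> (0 : R)^'+] --> (traj p 0 j : R) /\
    forall t : R, 0 < t ->
      is_derive t 1 (fun s => traj p s j)
        (- grad_CL phi alpha (W1 t) (W2 t) (B1 t) (B2 t) p j).

Definition vnorm (v : vec) : R := Num.sqrt (\sum_k v k ^+ 2).

Definition basisv (i : 'I_d) : vec := fun k => if k == i then 1 else 0.

End Defs.

(* Only the second coordinate of the network sees [e_2].  Because that coordinate is
   always resampled and [phi_2 = 1], the sign flip [x_2 -> -x_2] preserves the law of
   the augmented pairs and kills every term of the gradient but [4 F^3 dF], where
   [F = f_2(e_2)_2].  Writing [p = |w_22|], [q = |w_12| - b_12], [c2 = b_22] and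
   [rho = relu (p q - c2) = |F|], the flow of coordinate 2 becomes
     p' = -4 rho^3 q,  q' = -8 rho^3 p,  b_12' = 4 rho^3 p,  c2' = 4 rho^3
   as long as [p], [q], [b_12], [c2] stay positive.  There [b_12] and [c2] grow, [p]
   decreases, and [g = p q - c2] satisfies [g' = -4 rho^3 (q^2 + 2 p^2 + 1)], so [g]
   decreases but stays nonnegative (its derivative vanishes with [rho]); a continuity
   argument shows the positivity region is never left.  Hence [g' <= -g^3] forces [f_2(e_2) -> 0], while
   [p q >= c2 >= b0] and [p <= p(0) <= sqrt b0] give [|f_1(e_2)| = q >= sqrt b0]. *)

From HB Require Import structures.
From mathcomp Require Import all_boot all_order all_algebra.
From mathcomp Require Import all_classical all_reals all_analysis.
From mathcomp Require Import ring lra.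
Import Order.TTheory GRing.Theory Num.Theory.
Import numFieldNormedType.Exports.
Local Open Scope classical_set_scope.
Local Open Scope ring_scope.
Set Implicit Arguments. Unset Strict Implicit. Unset Printing Implicit Defensive.

Lemma sum_involution_odd (R : numFieldType) (T : finType) (f : T -> T) (F : T -> R) :
  involutive f -> (forall a, F (f a) = - F a) -> \sum_a F a = 0.
Proof.
move=> fK Fodd.
have : \sum_a F a = - \sum_a F a.
  rewrite -sumrN [LHS](reindex_inj (inv_inj fK)) /=.
  by apply: eq_bigr => a _; rewrite Fodd.
by move/eqP; rewrite -subr_eq0 opprK -mulr2n mulrn_eq0 => /eqP.
Qed.

Section Activation.
Variable R : realType.

Lemma ger0_relu (z : R) : 0 <= z -> relu z = z.
Proof. by move=> z0; rewrite /relu max_l. Qed.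
Lemma ler0_relu (z : R) : z <= 0 -> relu z = 0.
Proof. by move=> z0; rewrite /relu max_r. Qed.
Lemma relu_ge0 (z : R) : 0 <= relu z.
Proof. by rewrite /relu le_max lexx orbT. Qed.
Lemma gtr0_drelu (z : R) : 0 < z -> drelu z = 1.
Proof. by move=> z0; rewrite /drelu z0. Qed.
Lemma ler0_drelu (z : R) : z <= 0 -> drelu z = 0.
Proof. by move=> z0; rewrite /drelu ltNge z0. Qed.

Lemma sym_relu0 (b : R) : sym_relu 0 b = 0.
Proof. by rewrite /sym_relu oppr0 subrr. Qed.

Lemma sym_reluN (a b : R) : sym_relu (- a) b = - sym_relu a b.
Proof. by rewrite /sym_relu opprK opprB. Qed.
Lemma dsym_aN (a b : R) : dsym_a (- a) b = dsym_a a b.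
Proof. by rewrite /dsym_a opprK addrC. Qed.
Lemma dsym_bN (a b : R) : dsym_b (- a) b = - dsym_b a b.
Proof. by rewrite /dsym_b opprK opprD opprK addrC. Qed.

Lemma sgnbN (b : bool) : sgnb R (~~ b) = - sgnb R b.
Proof. by case: b; rewrite /= ?opprK. Qed.

Lemma sgnb_sqr (s : bool) : sgnb R s * sgnb R s = 1.
Proof. by case: s; rewrite /= ?mulr1 ?mulN1r ?opprK. Qed.

Lemma sgnb_ge0_mul (x : R) : sgnb R (0 <= x) * x = `|x|.
Proof.
rewrite /sgnb; case: ifPn => [x0|]; first by rewrite mul1r ger0_norm.
by rewrite -ltNge => /ltW /ler0_norm ->; rewrite mulN1r.
Qed.

Lemma normr_sgnb (s : bool) : `|sgnb R s| = 1.
Proof. by case: s; rewrite /= ?normrN normr1. Qed.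

Section PositiveBias.
Variables (y b : R).
Hypotheses (y0 : 0 <= y) (b0 : 0 < b).

Let ler0_Nyb : - y - b <= 0.
Proof. by rewrite -opprD oppr_le0 addr_ge0 // ltW. Qed.

Lemma sym_relu_sgnb s : sym_relu (sgnb R s * y) b = sgnb R s * relu (y - b).
Proof.
suff pos : sym_relu y b = relu (y - b).
  by case: s; rewrite /= ?mul1r // !mulN1r sym_reluN pos.
by rewrite /sym_relu (ler0_relu ler0_Nyb) subr0.
Qed.

Lemma dsym_a_sgnb s : dsym_a (sgnb R s * y) b = drelu (y - b).
Proof.
suff pos : dsym_a y b = drelu (y - b).
  by case: s; rewrite /= ?mul1r // mulN1r dsym_aN pos.
by rewrite /dsym_a (ler0_drelu ler0_Nyb) addr0.
Qed.

Lemma dsym_b_sgnb s : dsym_b (sgnb R s * y) b = - sgnb R s * drelu (y - b).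
Proof.
suff pos : dsym_b y b = - drelu (y - b).
  by case: s; rewrite /= ?mul1r ?mulN1r ?dsym_bN pos; ring.
by rewrite /dsym_b (ler0_drelu ler0_Nyb) addr0.
Qed.

End PositiveBias.

End Activation.

Section CoordinateSymmetry.
Variables (R : realType) (d : nat) (i : 'I_d).


Definition negc (x : vec R d) : vec R d :=
  fun k => if k == i then - x k else x k.

Lemma net2_negc (w1 w2 b1 b2 x : vec R d) k :
  net2 w1 w2 b1 b2 (negc x) k =
  if k == i then - net2 w1 w2 b1 b2 x k else net2 w1 w2 b1 b2 x k.
Proof.
by rewrite /net2 /net1 /negc; case: (k == i); rewrite // mulrN sym_reluN mulrN sym_reluN.
Qed.

Lemma dnet2_negc (w1 w2 b1 b2 x : vec R d) p k :
  dnet2 w1 w2 b1 b2 p i (negc x) k = - dnet2 w1 w2 b1 b2 p i x k.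
Proof.
rewrite /dnet2 /net1 /negc; case: eqP => [<-|_]; last by rewrite oppr0.
by rewrite eqxx; case: p; rewrite !mulrN !sym_reluN !mulrN ?dsym_aN ?dsym_bN; ring.
Qed.

Notation F w1 w2 b1 b2 x := (net2 w1 w2 b1 b2 x i).
Notation D w1 w2 b1 b2 p x := (dnet2 w1 w2 b1 b2 p i x i).

Lemma ddotfE (w1 w2 b1 b2 : vec R d) p u v :
  ddotf w1 w2 b1 b2 p i u v =
  D w1 w2 b1 b2 p u * F w1 w2 b1 b2 v + F w1 w2 b1 b2 u * D w1 w2 b1 b2 p v.
Proof.
rewrite /ddotf (bigD1 i) //= big1 ?addr0 // => k /negPf ki.
by rewrite /dnet2 eq_sym ki !mul0r mulr0 addr0.
Qed.

Definition dotf_off (w1 w2 b1 b2 u v : vec R d) : R :=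
  \sum_(k | k != i) net2 w1 w2 b1 b2 u k * net2 w1 w2 b1 b2 v k.

Lemma dotfE (w1 w2 b1 b2 u v : vec R d) :
  dotf w1 w2 b1 b2 u v = F w1 w2 b1 b2 u * F w1 w2 b1 b2 v + dotf_off w1 w2 b1 b2 u v.
Proof. by rewrite /dotf (bigD1 i). Qed.

Lemma dotf_off_negc (w1 w2 b1 b2 u v : vec R d) :
  dotf_off w1 w2 b1 b2 u (negc v) = dotf_off w1 w2 b1 b2 u v.
Proof. by apply: eq_bigr => k /negPf ki; rewrite net2_negc ki. Qed.

Definition flip_aug (a : {ffun 'I_d -> bool * bool}) : {ffun 'I_d -> bool * bool} :=
  [ffun k => if k == i then ((a k).1, ~~ (a k).2) else a k].

Lemma flip_augK : involutive flip_aug.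
Proof.
move=> a; apply/ffunP => k; rewrite !ffunE; case: eqP => // ->.
by rewrite /= negbK; case: (a i).
Qed.

Lemma paug_flip (alpha : vec R d) a : paug alpha (flip_aug a) = paug alpha a.
Proof. by apply: eq_bigr => k _; rewrite ffunE; case: eqP => // ->. Qed.


Lemma augpt_flip (phi : vec R d) s (a : {ffun 'I_d -> bool * bool}) : (a i).1 ->
  augpt phi s (flip_aug a) = negc (augpt phi s a).
Proof.
move=> ai; apply: funext => k; rewrite /augpt /negc ffunE.
by case: eqP => [->|_] //=; rewrite ai sgnbN mulNr.
Qed.

Lemma paug_kept (alpha : vec R d) (a : {ffun 'I_d -> bool * bool}) :
  alpha i = 1 -> ~~ (a i).1 -> paug alpha a = 0.
Proof. by move=> al /negPf ai; rewrite /paug (bigD1 i) //= ai al subrr !mul0r. Qed.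

Lemma sum_aug_odd (phi alpha : vec R d) s (c : R) (h : vec R d -> R) :
  alpha i = 1 -> (forall v, h (negc v) = - h v) ->
  \sum_a c * paug alpha a * h (augpt phi s a) = 0.
Proof.
move=> al hodd; apply: (sum_involution_odd flip_augK) => a.
rewrite paug_flip; have [ai|ai] := boolP (a i).1.
  by rewrite augpt_flip // hodd mulrN.
by rewrite paug_kept // mulr0 !mul0r oppr0.
Qed.

Lemma Epos_odd (phi alpha : vec R d) g : alpha i = 1 ->
  (forall u v, g u (negc v) = - g u v) -> Epos phi alpha g = 0.
Proof.
move=> al godd; rewrite /Epos big1 // => s _; rewrite big1 // => a1 _.
exact: sum_aug_odd.
Qed.

Lemma Eneg_odd (phi alpha : vec R d) g : alpha i = 1 ->
  (forall u v, g u (negc v) = - g u v) -> Eneg phi alpha g = 0.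
Proof.
move=> al godd; rewrite /Eneg big1 // => s1 _; rewrite big1 // => s2 _.
rewrite big1 // => a1 _; exact: sum_aug_odd.
Qed.

Lemma EnegD (phi alpha : vec R d) g1 g2 :
  Eneg phi alpha (fun u v => g1 u v + g2 u v) = Eneg phi alpha g1 + Eneg phi alpha g2.
Proof.
rewrite /Eneg -big_split; apply: eq_bigr => s1 _.
rewrite -big_split; apply: eq_bigr => s2 _.
rewrite -big_split; apply: eq_bigr => a1 _.
by rewrite -big_split; apply: eq_bigr => a2 _; rewrite mulrDr.
Qed.

Lemma sum_paug (alpha : vec R d) : \sum_a paug alpha a = 1.
Proof.
rewrite /paug -(bigA_distr_bigA (fun k (x : bool * bool) =>
   (if x.1 then alpha k else 1 - alpha k) / 2)) /=.
rewrite big1 // => k _; rewrite -(pair_big xpredT xpredT (fun (x y : bool) =>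
   (if (x, y).1 then alpha k else 1 - alpha k) / 2)) /=.
by rewrite !big_bool /=; field.
Qed.

Lemma sum_pdata : \sum_(s : {ffun 'I_d -> bool}) pdata R d = 1.
Proof.
rewrite sumr_const card_ffun card_bool card_ord /pdata -[_ *+ _]mulr_natr natrX.
by rewrite mulVf // expf_neq0 // pnatr_eq0.
Qed.

Lemma Eneg_cst (phi alpha : vec R d) c : Eneg phi alpha (fun _ _ => c) = c.
Proof.
have sum_paugM X : \sum_a X * paug alpha a * c = X * c.
  by rewrite -[RHS]mulr1 -(sum_paug alpha) big_distrr; apply: eq_bigr => a _ /=; ring.
have sum_pdataM X : \sum_(s : {ffun 'I_d -> bool}) X * pdata R d * c = X * c.
  by rewrite -[RHS]mulr1 -sum_pdata big_distrr; apply: eq_bigr => a _ /=; ring.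
rewrite /Eneg; under eq_bigr do under eq_bigr do under eq_bigr do rewrite sum_paugM.
under eq_bigr do under eq_bigr do rewrite sum_paugM.
under eq_bigr do rewrite sum_pdataM.
by rewrite -[RHS]mul1r -sum_pdata big_distrl; apply: eq_bigr => s _ /=; ring.
Qed.

Lemma Eneg_resampled (phi alpha : vec R d) g c : alpha i = 1 ->
  (forall s1 s2 (a1 a2 : {ffun 'I_d -> bool * bool}), (a1 i).1 -> (a2 i).1 ->
     g (augpt phi s1 a1) (augpt phi s2 a2) = c) -> Eneg phi alpha g = c.
Proof.
move=> al gc; rewrite -[RHS](Eneg_cst phi alpha c) /Eneg.
apply: eq_bigr => s1 _; apply: eq_bigr => s2 _; apply: eq_bigr => a1 _.
apply: eq_bigr => a2 _.
have [a1i|a1i] := boolP (a1 i).1; last by rewrite (paug_kept al a1i) mulr0 !mul0r.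
have [a2i|a2i] := boolP (a2 i).1; last by rewrite (paug_kept al a2i) mulr0 !mul0r.
by rewrite gc.
Qed.

Lemma net2_dnet2_sgnb (w1 w2 b1 b2 x : vec R d) p b : x i = sgnb R b ->
  F w1 w2 b1 b2 x = sgnb R b * F w1 w2 b1 b2 (basisv R i) /\
  D w1 w2 b1 b2 p x = sgnb R b * D w1 w2 b1 b2 p (basisv R i).
Proof.
have local (y : vec R d) : x i = y i ->
    F w1 w2 b1 b2 x = F w1 w2 b1 b2 y /\ D w1 w2 b1 b2 p x = D w1 w2 b1 b2 p y.
  by rewrite /net2 /dnet2 /net1 eqxx => ->.
have ei : basisv R i i = 1 by rewrite /basisv eqxx.
case: b => /= xi.
  by rewrite !mul1r; apply: local; rewrite xi ei.
have [-> ->] : F w1 w2 b1 b2 x = F w1 w2 b1 b2 (negc (basisv R i)) /\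
    D w1 w2 b1 b2 p x = D w1 w2 b1 b2 p (negc (basisv R i)).
  by apply: local; rewrite /negc eqxx ei xi.
by rewrite net2_negc dnet2_negc eqxx !mulN1r.
Qed.

(* Only the [i]-th output depends on the [i]-th parameters.  As coordinate [i] is always
   resampled, flipping its sign preserves the augmentation law, so every term that is odd
   in that sign (the positive pairs, and the other outputs in the negative pairs) averages
   out. *)
Lemma grad_CL_resampled (phi alpha w1 w2 b1 b2 : vec R d) p :
  phi i = 1 -> alpha i = 1 ->
  grad_CL phi alpha w1 w2 b1 b2 p i =
  4 * F w1 w2 b1 b2 (basisv R i) ^+ 3 * D w1 w2 b1 b2 p (basisv R i).
Proof.
move=> ph al; rewrite /grad_CL (Epos_odd _ al); last first.
  by move=> u v; rewrite !ddotfE net2_negc eqxx dnet2_negc; ring.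
have -> : (fun u v => 2 * dotf w1 w2 b1 b2 u v * ddotf w1 w2 b1 b2 p i u v) =
  (fun u v => 2 * (F w1 w2 b1 b2 u * F w1 w2 b1 b2 v) * ddotf w1 w2 b1 b2 p i u v
      + 2 * dotf_off w1 w2 b1 b2 u v * ddotf w1 w2 b1 b2 p i u v).
  by apply: funext => u; apply: funext => v; rewrite dotfE; ring.
rewrite EnegD [X in _ + (_ + X)](Eneg_odd _ al); last first.
  by move=> u v; rewrite dotf_off_negc !ddotfE net2_negc eqxx dnet2_negc; ring.
rewrite (Eneg_resampled (c := 4 * F w1 w2 b1 b2 (basisv R i) ^+ 3 *
   D w1 w2 b1 b2 p (basisv R i)) al); first by ring.
move=> s1 s2 a1 a2 a1i a2i; rewrite ddotfE.
have ui : augpt phi s1 a1 i = sgnb R (a1 i).2 by rewrite /augpt a1i ph mulr1.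
have vi : augpt phi s2 a2 i = sgnb R (a2 i).2 by rewrite /augpt a2i ph mulr1.
have [Fu Du] := net2_dnet2_sgnb w1 w2 b1 b2 p ui.
have [Fv Dv] := net2_dnet2_sgnb w1 w2 b1 b2 p vi.
by rewrite Fu Du Fv Dv; case: (a1 i).2; case: (a2 i).2 => /=; ring.
Qed.

End CoordinateSymmetry.

Section BasisInput.
Variables (R : realType) (d : nat) (i : 'I_d).



Notation e := (basisv R i).

Lemma basisv_id : e i = 1.
Proof. by rewrite /basisv eqxx. Qed.

Lemma vnorm_supp1 (v : vec R d) : (forall k, k != i -> v k = 0) -> vnorm v = `|v i|.
Proof.
move=> v0; rewrite /vnorm (bigD1 i) //= big1 ?addr0 ?sqrtr_sqr //.
by move=> k /v0 ->; rewrite expr0n.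
Qed.

Lemma net1_basis_off (w1 b1 : vec R d) k : k != i -> net1 w1 b1 e k = 0.
Proof. by move=> /negPf ki; rewrite /net1 /basisv ki mulr0 sym_relu0. Qed.

Lemma net2_basis_off (w1 w2 b1 b2 : vec R d) k : k != i -> net2 w1 w2 b1 b2 e k = 0.
Proof. by move=> ki; rewrite /net2 net1_basis_off // mulr0 sym_relu0. Qed.

Section ActiveRegion.
Variables (w1 w2 b1 b2 : vec R d) (s1 s2 : bool) (p q : R).
Hypotheses (p0 : 0 < p) (q0 : 0 < q) (b10 : 0 < b1 i) (b20 : 0 < b2 i).
Hypotheses (w1E : w1 i = sgnb R s1 * (q + b1 i)) (w2E : w2 i = sgnb R s2 * p).

Let rho := relu (p * q - b2 i).

Let a1E : w1 i * e i = sgnb R s1 * (q + b1 i).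
Proof. by rewrite basisv_id mulr1. Qed.

Lemma net1_basis : net1 w1 b1 e i = sgnb R s1 * q.
Proof.
have qb : 0 <= q + b1 i by rewrite addr_ge0 // ltW.
by rewrite /net1 a1E sym_relu_sgnb // addrK ger0_relu // ltW.
Qed.

Let a2E : w2 i * net1 w1 b1 e i = sgnb R (s1 == s2) * (p * q).
Proof. by rewrite net1_basis w2E; case: s1; case: s2 => /=; ring. Qed.

Lemma net2_basis : net2 w1 w2 b1 b2 e i = sgnb R (s1 == s2) * rho.
Proof. by rewrite /net2 a2E sym_relu_sgnb // mulr_ge0 // ltW. Qed.

Lemma grad_basis :
  let F := net2 w1 w2 b1 b2 e i in [/\
  4 * F ^+ 3 * dnet2 w1 w2 b1 b2 PW1 i e i = 4 * sgnb R s1 * rho ^+ 3 * p,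
  4 * F ^+ 3 * dnet2 w1 w2 b1 b2 PW2 i e i = 4 * sgnb R s2 * rho ^+ 3 * q,
  4 * F ^+ 3 * dnet2 w1 w2 b1 b2 PB1 i e i = - 4 * rho ^+ 3 * p &
  4 * F ^+ 3 * dnet2 w1 w2 b1 b2 PB2 i e i = - 4 * rho ^+ 3].
Proof.
have qb : 0 <= q + b1 i by rewrite addr_ge0 // ltW.
have pq : 0 <= p * q by rewrite mulr_ge0 // ltW.
have da1 : dsym_a (sgnb R s1 * (q + b1 i)) (b1 i) = 1.
  by rewrite dsym_a_sgnb // addrK gtr0_drelu.
have db1 : dsym_b (sgnb R s1 * (q + b1 i)) (b1 i) = - sgnb R s1.
  by rewrite dsym_b_sgnb // addrK gtr0_drelu // mulr1.
have da2 : dsym_a (sgnb R (s1 == s2) * (p * q)) (b2 i) = drelu (p * q - b2 i).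
  exact: dsym_a_sgnb.
have db2 : dsym_b (sgnb R (s1 == s2) * (p * q)) (b2 i) =
    - sgnb R (s1 == s2) * drelu (p * q - b2 i).
  exact: dsym_b_sgnb.
rewrite /= net2_basis /dnet2 eqxx a2E a1E net1_basis w2E basisv_id da1 db1 da2 db2.
have [pq_b2|pq_b2] := ltP 0 (p * q - b2 i).
  by rewrite gtr0_drelu //; split; case: s1; case: s2 => /=; ring.
by rewrite /rho ler0_relu //; split; ring.
Qed.

End ActiveRegion.
End BasisInput.

Section ContDerivable.
Variable R : realType.
Implicit Types (f df : R -> R) (a b t T : R).

Definition cont0_derivable f :=
  f x @[x --> (0 : R)^'+] --> f 0 /\ forall t, 0 < t -> derivable f t 1.

Lemma is_derive_cont0_derivable f df : f x @[x --> (0 : R)^'+] --> f 0 ->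
  (forall t, 0 < t -> is_derive t 1 f (df t)) -> cont0_derivable f.
Proof. by move=> f0 fd; split=> // t /fd /@ex_derive. Qed.

Lemma cont0_derivable_cvg f t : cont0_derivable f -> 0 < t -> f x @[x --> t] --> f t.
Proof.
by move=> [_ df] t0; apply: differentiable_continuous; exact/derivable1_diffP/df.
Qed.

Lemma cont0_derivable_cvg_right f t :
  cont0_derivable f -> 0 <= t -> f x @[x --> t^'+] --> f t.
Proof.
move=> fc; rewrite le_eqVlt => /orP[/eqP <-|t0]; first exact: fc.1.
exact/cvg_at_right_filter/cont0_derivable_cvg.
Qed.

Lemma cont0_derivable_within f a b :
  cont0_derivable f -> 0 <= a -> a < b -> {within `[a, b], continuous f}.
Proof.
move=> fc a0 ab; have [a_gt0|a_le0] := ltP 0 a.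
  apply: derivable_within_continuous => x; rewrite in_itv /= => /andP[ax _].
  by apply: fc.2; apply: lt_le_trans ax.
have a_eq0 : a = 0 by apply/eqP; rewrite eq_le a_le0 a0.
subst a; apply/continuous_within_itvP => //; split.
- by move=> x; rewrite in_itv /= => /andP[x0 _]; exact: cont0_derivable_cvg.
- exact: fc.1.
- exact/cvg_at_left_filter/cont0_derivable_cvg.
Qed.


Lemma cont0_derivableB f g :
  cont0_derivable f -> cont0_derivable g -> cont0_derivable (f \- g).
Proof.
move=> [f0 fd] [g0 gd]; split; first exact: cvgB.
by move=> t t0; exact: derivableB (fd t t0) (gd t t0).
Qed.

Lemma cont0_derivableM f g :
  cont0_derivable f -> cont0_derivable g -> cont0_derivable (f \* g).
Proof.
move=> [f0 fd] [g0 gd]; split; first exact: cvgM.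
by move=> t t0; exact: derivableM (fd t t0) (gd t t0).
Qed.

Lemma cont0_derivable_cst (c : R) : cont0_derivable (cst c).
Proof. by split=> [|t _]; [exact: cvg_cst|exact: derivable_cst]. Qed.

Lemma cont0_derivableZ (c : R) f : cont0_derivable f -> cont0_derivable (c \*o f).
Proof. by move=> fc; apply: (cont0_derivableM (cont0_derivable_cst c)). Qed.

Lemma cont0_derivable_ndecr f df a b : cont0_derivable f -> 0 <= a -> a <= b ->
  (forall t, t \in `]a, b[ -> is_derive t 1 f (df t)) ->
  (forall t, t \in `]a, b[ -> 0 <= df t) -> f a <= f b.
Proof.
move=> fc a0; rewrite le_eqVlt => /orP[/eqP <-//|ab] fd df0.
apply: (@ger0_derive1_le_cc _ f a b) => //.
- by move=> t /fd /@ex_derive.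
- by move=> t tab; have fdt := fd t tab; rewrite derive1E derive_val df0.
- exact: cont0_derivable_within.
- by rewrite in_itv /= lexx ltW.
- by rewrite in_itv /= lexx ltW.
- exact: ltW.
Qed.

Lemma cont0_derivable_nincr f df a b : cont0_derivable f -> 0 <= a -> a <= b ->
  (forall t, t \in `]a, b[ -> is_derive t 1 f (df t)) ->
  (forall t, t \in `]a, b[ -> df t <= 0) -> f b <= f a.
Proof.
move=> fc a0; rewrite le_eqVlt => /orP[/eqP <-//|ab] fd df0.
apply: (@ler0_derive1_le_cc _ f a b) => //.
- by move=> t /fd /@ex_derive.
- by move=> t tab; have fdt := fd t tab; rewrite derive1E derive_val df0.
- exact: cont0_derivable_within.
- by rewrite in_itv /= lexx ltW.
- by rewrite in_itv /= lexx ltW.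
- exact: ltW.
Qed.

Lemma cont0_derivable_ge0_left f T : cont0_derivable f -> 0 < T ->
  (forall t, 0 < t -> t < T -> 0 <= f t) -> 0 <= f T.
Proof.
move=> fc T0 f_ge0; rewrite leNgt; apply/negP => fT.
have : \forall t \near T^'-, False.
  near=> t; have := f_ge0 t; rewrite leNgt => /(_ _ _)/negP; apply.
  - by near: t; exact: nbhs_left_gt.
  - by near: t; exact: nbhs_left_lt.
  - near: t; exact: cvgr_lt (f T) (cvg_at_left_filter (cont0_derivable_cvg fc T0)) 0 fT.
by move/filter_ex => [].
Unshelve. all: by end_near.
Qed.

Lemma cont0_derivable_gt0_right f T : cont0_derivable f -> 0 <= T -> 0 < f T ->
  \forall t \near T^'+, 0 < f t.
Proof. by move=> fc T0 fT; exact: cvgr_gt (f T) (cont0_derivable_cvg_right fc T0) 0 fT. Qed.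

Lemma real_induction (P : R -> Prop) :
  (forall T, 0 <= T -> (forall t, 0 <= t -> t < T -> P t) -> P T) ->
  (forall T, 0 <= T -> P T -> \forall t \near T^'+, P t) ->
  forall t, 0 <= t -> P t.
Proof.
move=> closedP openP t t0; apply: contrapT => nPt.
pose E := [set u : R | 0 <= u /\ ~ P u].
have E_lb : has_lbound E by exists 0 => u [].
have E_inf : has_inf E by split=> //; exists t.
pose T := inf E.
have T0 : 0 <= T by apply: lb_le_inf => [|u []//]; exists t.
have PT : P T.
  apply: closedP => // u u0 uT; apply: contrapT => nPu.
  by have := ge_inf E_lb (conj u0 nPu); rewrite leNgt uT.
have := openP T T0 PT; rewrite near_withinE => -[e /= e0 PTe].
have [y [y0 nPy] yT] := inf_adherent e0 E_inf.
have Ty : T <= y := ge_inf E_lb (conj y0 nPy).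
have [yT'|Ty'] := eqVneq y T; first by apply: nPy; rewrite yT'.
apply: nPy; apply: PTe; last by rewrite lt_neqAle eq_sym Ty' Ty.
by rewrite /ball_ /= ltr_norml; apply/andP; split; lra.
Qed.


Lemma cont0_derivable_ge0_until f df T : cont0_derivable f -> 0 <= f 0 ->
  (forall t, t \in `]0, T[ -> is_derive t 1 f (df t)) ->
  (forall t, t \in `]0, T[ -> df t <= 0) ->
  (forall t, t \in `]0, T[ -> f t <= 0 -> df t = 0) ->
  forall t, 0 <= t -> t < T -> 0 <= f t.
Proof.
move=> fc f0 fd df_le0 df0 t t0 tT; rewrite leNgt; apply/negP => ft.
have subT a b : 0 <= a -> b <= T -> {subset `]a, b[ <= `]0, T[}.
  move=> a0 bT x; rewrite !in_itv /= => /andP[ax xb].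
  by rewrite (le_lt_trans a0 ax) (lt_le_trans xb bT).
have t_gt0 : 0 < t by rewrite lt_neqAle t0 andbT; apply: contraTneq ft => <-; rewrite -leNgt.
have [s] : exists2 s : R, s \in `[0, t] & f s = 0.
  apply: IVT => //; first exact: cont0_derivable_within.
  by rewrite ge_min le_max f0 (ltW ft) orbT.
rewrite in_itv /= => /andP[s0 st] fs.
have st_lt : s < t by rewrite lt_neqAle st andbT; apply: contraTneq ft => <-; rewrite fs ltxx.
have st_sub : {subset `]s, t[ <= `]0, T[} := subT s t s0 (ltW tT).
have [c cst] := MVT st_lt (fun x xst => fd x (st_sub x xst))
  (cont0_derivable_within fc s0 st_lt).
have := cst; rewrite in_itv /= => /andP[sc ct].
have sc_sub := subT s c s0 (ltW (lt_trans ct tT)).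
have sc_le : s <= c by rewrite ltW.
have fd_sc x : x \in `]s, c[ -> is_derive x 1 f (df x) by move/sc_sub; exact: fd.
have df_sc x : x \in `]s, c[ -> df x <= 0 by move/sc_sub; exact: df_le0.
have fc_le0 : f c <= 0 by rewrite -fs; exact: cont0_derivable_nincr fc s0 sc_le fd_sc df_sc.
rewrite (df0 c (st_sub c cst) fc_le0) mul0r fs subr0 => ft0.
by move: ft; rewrite ft0 ltxx.
Qed.

Lemma cont0_derivable_cvg0 f df : cont0_derivable f ->
  (forall t, 0 <= t -> 0 <= f t) ->
  (forall t, 0 < t -> is_derive t 1 f (df t)) ->
  (forall t, 0 < t -> df t <= - f t ^+ 3) ->
  f t @[t --> +oo] --> 0.
Proof.
move=> fc f_ge0 fd df_le.
have df_le0 t : 0 < t -> df t <= 0.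
  move=> t0; apply: le_trans (df_le t t0) _.
  by rewrite oppr_le0 exprn_ge0 // f_ge0 // ltW.
have nincr a b : 0 <= a -> a <= b -> f b <= f a.
  move=> a0 ab; have pos x : x \in `]a, b[ -> 0 < x.
    by rewrite in_itv /= => /andP[ax _]; exact: le_lt_trans ax.
  exact: cont0_derivable_nincr fc a0 ab (fun x xab => fd x (pos x xab))
    (fun x xab => df_le0 x (pos x xab)).
apply/cvgrPdist_lt => e e0.
have e3 : 0 < e ^+ 3 by exact: exprn_gt0.
pose M := f 0 / e ^+ 3 + 1.
have M0 : 0 < M by rewrite ltr_wpDl // divr_ge0 // ?f_ge0 // ltW.
have fM : f M < e.
  rewrite ltNge; apply/negP => eM.
  have fd0M x : x \in `]0, M[ -> is_derive x 1 f (df x).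
    by rewrite in_itv /= => /andP[x0 _]; exact: fd.
  have [c] := MVT M0 fd0M (cont0_derivable_within fc (lexx 0) M0).
  rewrite in_itv /= => /andP[c0 cM]; rewrite subr0 => fM0.
  have ec : e <= f c by apply: le_trans eM (nincr c M (ltW c0) (ltW cM)).
  have dfc : df c <= - e ^+ 3.
    apply: le_trans (df_le c c0) _; rewrite lerN2 lerXn2r // nnegrE ltW //.
    exact: lt_le_trans ec.
  have : f M - f 0 <= - f 0 - e ^+ 3.
    have -> : - f 0 - e ^+ 3 = - e ^+ 3 * M by rewrite /M; field; rewrite gt_eqF.
    by rewrite fM0 ler_pM2r.
  have := f_ge0 M (ltW M0); lra.
exists M; split; first by rewrite num_real.
move=> t Mt; rewrite sub0r normrN ger0_norm ?f_ge0 //; last exact: le_trans (ltW M0) (ltW Mt).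
exact: le_lt_trans (nincr M t (ltW M0) (ltW Mt)) fM.
Qed.
End ContDerivable.

Lemma limf_einf_pinfty_ge (R : realType) (f : R -> R) (a M : R) :
  (forall t, M < t -> a <= f t) ->
  (a%:E <= limf_einf (fun t => (f t)%:E) (pinfty_nbhs R))%E.
Proof.
move=> fa; rewrite limf_einfE.
have tail : [set ereal_inf ((fun t => (f t)%:E) @` V) | V in pinfty_nbhs R]
    (ereal_inf ((fun t => (f t)%:E) @` [set t | M < t])).
  by exists [set t | M < t] => //; exists M; split=> //; rewrite num_real.
apply: le_trans (ereal_sup_ubound tail); apply: le_ereal_inf_tmp => _ [t Mt <-].
by rewrite lee_fin fa.
Qed.

(* The gradient flow of the second coordinate, in the variables [p = |w_22|],
   [q = |w_12| - b_12], [c1 = b_12] and [c2 = b_22]; [rho] is [|f_2(e_2)|]. *)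
Section CoordinateFlow.
Variables (R : realType) (p q c1 c2 : R -> R) (b0 : R).
Implicit Types t T : R.

Let g t := p t * q t - c2 t.
Let rho t := relu (g t).
Let region t := [/\ 0 < p t, 0 < q t, 0 < c1 t & 0 < c2 t].

Hypotheses (pc : cont0_derivable p) (qc : cont0_derivable q)
  (c1c : cont0_derivable c1) (c2c : cont0_derivable c2).
Hypothesis flow : forall t, 0 < t -> region t ->
  [/\ is_derive t 1 p (- (4 * rho t ^+ 3 * q t)),
      is_derive t 1 q (- (8 * rho t ^+ 3 * p t)),
      is_derive t 1 c1 (4 * rho t ^+ 3 * p t) &
      is_derive t 1 c2 (4 * rho t ^+ 3)].
Hypotheses (b0_gt0 : 0 < b0) (c10 : c1 0 = b0) (c20 : c2 0 = b0)
  (p0_gt0 : 0 < p 0) (q0_gt0 : 0 < q 0)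
  (p0_le : p 0 <= Num.sqrt b0) (g0_ge0 : b0 <= p 0 * q 0).

Let gc : cont0_derivable g.
Proof. exact: cont0_derivableB (cont0_derivableM pc qc) c2c. Qed.

Let gdot t := - (4 * rho t ^+ 3 * (q t ^+ 2 + 2 * p t ^+ 2 + 1)).

Let g_derive t : 0 < t -> region t -> is_derive t 1 g (gdot t).
Proof.
move=> t0 rt; have [dp dq _ dc2] := flow t0 rt.
apply: is_derive_eq (is_deriveB (is_deriveM dp dq) dc2) _.
by rewrite /GRing.scale /= /gdot; ring.
Qed.

Let gdot_le_cube t : 0 <= g t -> gdot t <= - g t ^+ 3.
Proof.
move=> gt; rewrite /gdot /rho ger0_relu // lerN2.
have K : 1 <= 4 * (q t ^+ 2 + 2 * p t ^+ 2 + 1).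
  by have := sqr_ge0 (q t); have := sqr_ge0 (p t); lra.
by rewrite -mulrA mulrCA ler_peMr // exprn_ge0.
Qed.

Let gdot_le0 t : gdot t <= 0.
Proof.
rewrite /gdot oppr_le0 !mulr_ge0 ?exprn_ge0 ?relu_ge0 //.
by rewrite -addrA addr_ge0 ?sqr_ge0 // addr_ge0 // mulr_ge0 // sqr_ge0.
Qed.

Let gdot_eq0 t : g t <= 0 -> gdot t = 0.
Proof. by move=> gt; rewrite /gdot /rho ler0_relu // expr0n /= mulr0 mul0r oppr0. Qed.

Let region_in T t : (forall u, 0 <= u -> u < T -> region u) ->
  t \in `]0, T[ -> 0 < t /\ region t.
Proof.
by move=> rT; rewrite in_itv /= => /andP[t0 tT]; split=> //; apply: rT => //; exact: ltW.
Qed.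

Let bounds_before T : (forall t, 0 <= t -> t < T -> region t) ->
  forall t, 0 <= t -> t < T -> [/\ b0 <= c1 t, b0 <= c2 t, p t <= p 0 & 0 <= g t].
Proof.
move=> rT t t0 tT.
have rT' (x : R) : x \in `]0, t[ -> 0 < x /\ region x.
  rewrite !in_itv /= => /andP[x0 xt]; apply: (region_in rT).
  by rewrite in_itv /= x0 (lt_trans xt tT).
have rate_ge0 x : 0 <= 4 * rho x ^+ 3.
  exact: mulr_ge0 (ler0n _ 4) (exprn_ge0 3 (relu_ge0 _)).
split.
- have dc1 (x : R) : x \in `]0, t[ -> is_derive x 1 c1 (4 * rho x ^+ 3 * p x).
    by move/rT' => [x0 rx]; have [] := flow x0 rx.
  have dc1_ge0 (x : R) : x \in `]0, t[ -> 0 <= 4 * rho x ^+ 3 * p x.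
    by move/rT' => [_ [px _ _ _]]; exact: mulr_ge0 (rate_ge0 x) (ltW px).
  by rewrite -c10; exact: cont0_derivable_ndecr c1c (lexx 0) t0 dc1 dc1_ge0.
- have dc2 (x : R) : x \in `]0, t[ -> is_derive x 1 c2 (4 * rho x ^+ 3).
    by move/rT' => [x0 rx]; have [] := flow x0 rx.
  have dc2_ge0 (x : R) : x \in `]0, t[ -> 0 <= 4 * rho x ^+ 3 by move=> _; exact: rate_ge0.
  by rewrite -c20; exact: cont0_derivable_ndecr c2c (lexx 0) t0 dc2 dc2_ge0.
- have dp (x : R) : x \in `]0, t[ -> is_derive x 1 p (- (4 * rho x ^+ 3 * q x)).
    by move/rT' => [x0 rx]; have [] := flow x0 rx.
  have dp_le0 (x : R) : x \in `]0, t[ -> - (4 * rho x ^+ 3 * q x) <= 0.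
    by move/rT' => [_ [_ qx _ _]]; rewrite oppr_le0; exact: mulr_ge0 (rate_ge0 x) (ltW qx).
  exact: cont0_derivable_nincr pc (lexx 0) t0 dp dp_le0.
- have g0 : 0 <= g 0 by rewrite /g c20 subr_ge0.
  have dg (x : R) : x \in `]0, T[ -> is_derive x 1 g (gdot x).
    by move/(region_in rT) => [x0 rx]; exact: g_derive.
  exact: cont0_derivable_ge0_until gc g0 dg (fun x _ => gdot_le0 x)
    (fun x _ => gdot_eq0 (t := x)) t t0 tT.
Qed.

Let region_forever t : 0 <= t -> region t.
Proof.
apply: real_induction t => [T T0 below|T T0 [pT qT c1T c2T]]; last first.
  by near=> t; split; near: t; apply: cont0_derivable_gt0_right.
have [T_gt0|T_le0] := ltP 0 T; last first.
  have -> : T = 0 by apply/eqP; rewrite eq_le T_le0 T0.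
  by split; rewrite ?c10 ?c20.
have bd := bounds_before below.
have ge0_at_T f : cont0_derivable f -> (forall t, 0 <= t -> t < T -> 0 <= f t) -> 0 <= f T.
  by move=> fc f_ge0; apply: cont0_derivable_ge0_left fc T_gt0 _ => t /ltW; exact: f_ge0.
have c1T : b0 <= c1 T.
  rewrite -subr_ge0; apply: (ge0_at_T (c1 \- cst b0)).
    exact: cont0_derivableB c1c (cont0_derivable_cst b0).
  by move=> t t0 tT /=; rewrite subr_ge0; have [] := bd t t0 tT.
have c2T : b0 <= c2 T.
  rewrite -subr_ge0; apply: (ge0_at_T (c2 \- cst b0)).
    exact: cont0_derivableB c2c (cont0_derivable_cst b0).
  by move=> t t0 tT /=; rewrite subr_ge0; have [] := bd t t0 tT.
have pT : 0 <= p T by apply: ge0_at_T pc _ => t t0 tT; have [/ltW] := below t t0 tT.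
have qT : 0 <= q T by apply: ge0_at_T qc _ => t t0 tT; have [_ /ltW] := below t t0 tT.
have pqT : 0 < p T * q T.
  have gT : 0 <= g T by apply: ge0_at_T gc _ => t t0 tT; have [] := bd t t0 tT.
  by apply: lt_le_trans b0_gt0 (le_trans c2T _); rewrite -subr_ge0.
split.
- by rewrite lt_neqAle pT andbT; apply: contraTneq pqT => <-; rewrite mul0r ltxx.
- by rewrite lt_neqAle qT andbT; apply: contraTneq pqT => <-; rewrite mulr0 ltxx.
- exact: lt_le_trans b0_gt0 c1T.
- exact: lt_le_trans b0_gt0 c2T.
Unshelve. all: end_near.
Qed.


Let bounds_forever t : 0 <= t -> [/\ b0 <= c2 t, p t <= p 0 & 0 <= g t].
Proof.
move=> t0; have t_lt : t < t + 1 by rewrite ltrDl.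
have [_ c2t pt gt] := bounds_before (T := t + 1)
  (fun u u0 _ => region_forever u0) t0 t_lt.
by split.
Qed.

Let q_ge t : 0 <= t -> Num.sqrt b0 <= q t.
Proof.
move=> t0; have [pt qt _ _] := region_forever t0.
have [c2t ptp gt] := bounds_forever t0.
have sb0 : 0 < Num.sqrt b0 by rewrite sqrtr_gt0.
rewrite -(ler_pM2l sb0) -expr2 sqr_sqrtr ?(ltW b0_gt0) //.
apply: le_trans c2t (le_trans (_ : c2 t <= p t * q t) _); first by rewrite -subr_ge0.
by rewrite ler_wpM2r ?(ltW qt) // (le_trans ptp).
Qed.

Let rho_cvg0 : rho t @[t --> +oo] --> 0.
Proof.
have g_ge0 t : 0 <= t -> 0 <= g t by move=> /bounds_forever [].
have dg t : 0 < t -> is_derive t 1 g (gdot t).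
  by move=> t0; exact: g_derive t0 (region_forever (ltW t0)).
have dg_le t : 0 < t -> gdot t <= - g t ^+ 3.
  by move=> t0; exact: gdot_le_cube (g_ge0 t (ltW t0)).
apply: cvg_trans (cont0_derivable_cvg0 gc g_ge0 dg dg_le).
apply: near_eq_cvg; near=> t; rewrite /rho ger0_relu // g_ge0 //.
Unshelve. all: end_near.
Qed.

Lemma coordinate_flow_long_time :
  (forall t, 0 <= t -> region t /\ Num.sqrt b0 <= q t) /\ rho t @[t --> +oo] --> 0.
Proof. by split=> [t t0|]; [split; [exact: region_forever|exact: q_ge]|exact: rho_cvg0]. Qed.

End CoordinateFlow.


Section SecondCoordinate.
Variables (R : realType) (d : nat) (i : 'I_d) (phi alpha : vec R d).
Variables (W1 W2 B1 B2 : R -> vec R d) (b0 : R).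
Hypotheses (gf : gradient_flow phi alpha W1 W2 B1 B2).
Hypotheses (phi_i : phi i = 1) (alpha_i : alpha i = 1).
Hypotheses (b0_gt0 : 0 < b0) (B10 : B1 0 i = b0) (B20 : B2 0 i = b0).
Hypotheses (w2_le : `|W2 0 i| <= Num.sqrt b0) (w_ge : b0 <= `|W2 0 i| * (`|W1 0 i| - b0)).
Implicit Types t : R.

Let s1 := 0 <= W1 0 i.
Let s2 := 0 <= W2 0 i.
Let p t := sgnb R s2 * W2 t i.
Let q t := sgnb R s1 * W1 t i - B1 t i.
Let c1 t := B1 t i.
Let c2 t := B2 t i.
Let rho t := relu (p t * q t - c2 t).
Let region t := [/\ 0 < p t, 0 < q t, 0 < c1 t & 0 < c2 t].

Let W1E t : W1 t i = sgnb R s1 * (q t + B1 t i).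
Proof. by rewrite /q subrK mulrA sgnb_sqr mul1r. Qed.

Let W2E t : W2 t i = sgnb R s2 * p t.
Proof. by rewrite /p mulrA sgnb_sqr mul1r. Qed.

Let coordinates_cont0_derivable :
  [/\ cont0_derivable p, cont0_derivable q, cont0_derivable c1 & cont0_derivable c2].
Proof.
have /= [W10 W1d] := gf PW1 i; have /= [W20 W2d] := gf PW2 i.
have /= [B10' B1d] := gf PB1 i; have /= [B20' B2d] := gf PB2 i.
have W1c := is_derive_cont0_derivable W10 W1d.
have W2c := is_derive_cont0_derivable W20 W2d.
have B1c := is_derive_cont0_derivable B10' B1d.
have B2c := is_derive_cont0_derivable B20' B2d.
split.
- exact: (cont0_derivableZ (sgnb R s2) W2c).
- exact: (cont0_derivableB (cont0_derivableZ (sgnb R s1) W1c) B1c).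
- exact: B1c.
- exact: B2c.
Qed.

Let coordinates_derive t : 0 < t -> region t ->
  [/\ is_derive t 1 p (- (4 * rho t ^+ 3 * q t)),
      is_derive t 1 q (- (8 * rho t ^+ 3 * p t)),
      is_derive t 1 c1 (4 * rho t ^+ 3 * p t) &
      is_derive t 1 c2 (4 * rho t ^+ 3)].
Proof.
move=> t0 [pt qt c1t c2t].
have [gw1 gw2 gb1 gb2] := grad_basis pt qt c1t c2t (W1E t) (W2E t).
have /= [_ W1d] := gf PW1 i; have /= [_ W2d] := gf PW2 i.
have /= [_ B1d] := gf PB1 i; have /= [_ B2d] := gf PB2 i.
have dW1 := W1d t t0; rewrite grad_CL_resampled // gw1 -/(rho t) in dW1.
have dW2 := W2d t t0; rewrite grad_CL_resampled // gw2 -/(rho t) in dW2.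
have dB1 := B1d t t0; rewrite grad_CL_resampled // gb1 -/(rho t) in dB1.
have dB2 := B2d t t0; rewrite grad_CL_resampled // gb2 -/(rho t) in dB2.
have sq1 := sgnb_sqr R s1; have sq2 := sgnb_sqr R s2.
split.
- apply: is_derive_eq (is_deriveZ (sgnb R s2) dW2) _.
  rewrite /GRing.scale /=; transitivity (- (4 * (sgnb R s2 * sgnb R s2) * rho t ^+ 3 * q t)).
    by ring.
  by rewrite sq2 mulr1.
- apply: is_derive_eq (is_deriveB (is_deriveZ (sgnb R s1) dW1) dB1) _.
  rewrite /GRing.scale /=; transitivity (- (4 * (sgnb R s1 * sgnb R s1) * rho t ^+ 3 * p t)
    - 4 * rho t ^+ 3 * p t); first by ring.
  by rewrite sq1 mulr1; ring.
- by apply: is_derive_eq dB1 _; ring.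
- by apply: is_derive_eq dB2 _; ring.
Qed.

Let vnorm_net2 t : region t ->
  vnorm (net2 (W1 t) (W2 t) (B1 t) (B2 t) (basisv R i)) = rho t.
Proof.
move=> [pt qt c1t c2t]; rewrite (vnorm_supp1 (i := i)) => [|k]; last exact: net2_basis_off.
rewrite (net2_basis pt qt c1t c2t (W1E t) (W2E t)) normrM normr_sgnb mul1r.
by rewrite ger0_norm ?relu_ge0.
Qed.

Let vnorm_net1 t : region t -> vnorm (net1 (W1 t) (B1 t) (basisv R i)) = q t.
Proof.
move=> [_ qt c1t _]; rewrite (vnorm_supp1 (i := i)) => [|k]; last exact: net1_basis_off.
by rewrite (net1_basis qt c1t (W1E t)) normrM normr_sgnb mul1r gtr0_norm.
Qed.

Lemma second_coordinate_long_time :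
  vnorm (net2 (W1 t) (W2 t) (B1 t) (B2 t) (basisv R i)) @[t --> +oo] --> 0 /\
  forall t, 0 <= t -> Num.sqrt b0 <= vnorm (net1 (W1 t) (B1 t) (basisv R i)).
Proof.
have [pc qc c1c c2c] := coordinates_cont0_derivable.
have p0 : p 0 = `|W2 0 i| := sgnb_ge0_mul _.
have q0 : q 0 = `|W1 0 i| - b0 by rewrite /q sgnb_ge0_mul B10.
have p0_gt0 : 0 < p 0.
  rewrite p0 lt_neqAle normr_ge0 andbT; apply: contraTneq w_ge => <-.
  by rewrite mul0r -ltNge.
have q0_gt0 : 0 < q 0.
  rewrite q0 ltNge; apply: contraTN w_ge => q0_le; rewrite -ltNge.
  exact: le_lt_trans (mulr_ge0_le0 (normr_ge0 _) q0_le) b0_gt0.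
have p0_le : p 0 <= Num.sqrt b0 by rewrite p0.
have g0_ge0 : b0 <= p 0 * q 0 by rewrite p0 q0.
have [region_q rho_cvg] := coordinate_flow_long_time pc qc c1c c2c coordinates_derive
  b0_gt0 B10 B20 p0_gt0 q0_gt0 p0_le g0_ge0.
split=> [|t t0]; last by have [rt qt] := region_q t t0; rewrite vnorm_net1.
apply: cvg_trans rho_cvg; apply: near_eq_cvg; near=> t.
rewrite vnorm_net2 //; apply: (region_q t _).1.
by near: t; exact: nbhs_pinfty_ge.
Unshelve. all: end_near.
Qed.

End SecondCoordinate.


Theorem theorem3p8 (R : realType) (d : nat) (i1 i2 : 'I_d)
  (phi alpha : 'I_d -> R) (b0 : R) (W1 W2 B1 B2 : R -> 'I_d -> R) :
  (2 <= d)%N -> nat_of_ord i1 = 0%N -> nat_of_ord i2 = 1%N ->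
  (forall i, 0 < phi i) -> (forall i, 0 <= alpha i <= 1) ->
  phi i1 = 1 -> phi i2 = 1 -> alpha i1 = 0 -> alpha i2 = 1 ->
  gradient_flow phi alpha W1 W2 B1 B2 ->
  0 < b0 ->
  (forall k, B1 0 k = b0) -> (forall k, B2 0 k = b0) ->
  `|W2 0 i2| <= Num.sqrt b0 ->
  `|W2 0 i2| * (`|W1 0 i2| - b0) >= b0 ->
  (fun t => vnorm (net2 (W1 t) (W2 t) (B1 t) (B2 t) (basisv R i2)))
     x @[x --> +oo] --> 0
  /\
  (limf_einf (fun t => (vnorm (net1 (W1 t) (B1 t) (basisv R i2)))%:E) (pinfty_nbhs R)
     >= (Num.sqrt b0)%:E)%E.
Proof.
move=> _ _ _ _ _ _ phi2 _ alpha2 gf b0_gt0 B10 B20 w2_le w_ge.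
have [net2_cvg0 net1_ge] :=
  second_coordinate_long_time gf phi2 alpha2 b0_gt0 (B10 i2) (B20 i2) w2_le w_ge.
split=> //; apply: (limf_einf_pinfty_ge (M := 0)) => t /ltW; exact: net1_ge.
Qed.
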